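(* $$\sum_{n=1}^\infty(M_e(\mathcal{D},n)-M_o(\mathcal{D},n))q^n=\frac{1}{1+q}\sum_{n=1}^\infty q^{n(3n+1)/2}(1-q^{2n+1})-q(q^2;q)_{\infty}.$$
   Context: $(z;q)_\infty=\prod_{j\ge0}(1-zq^j)$. $M_e(\mathcal{D},n)$ (resp. $M_o(\mathcal{D},n)$) is the number of partitions of $n$ into distinct parts with even (resp. odd) crank, where for a partition into distinct parts the crank is its largest part if $1$ is not a part, and is (number of parts) $-2$ if $1$ is a part. *)

From mathcomp Require Import all_boot all_order all_algebra ssrint.
Set Implicit Arguments. Unset Strict Implicit. Unset Printing Implicit Defensive.
Import Order.TTheory GRing.Theory Num.Theory.
Local Open Scope ring_scope.

(* A partition of n into distinct parts is identified with its set of parts,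
   a subset A of {0,...,n} not containing 0 whose elements sum to n. *)
Definition distinct_partition (n : nat) (A : {set 'I_n.+1}) : bool :=
  (ord0 \notin A) && ((\sum_(i in A) (i : nat))%N == n).

Definition dcrank (n : nat) (A : {set 'I_n.+1}) : int :=
  if [exists i in A, (i : nat) == 1%N]
  then (#|A|%:Z - 2)%R
  else (\max_(i in A) (i : nat))%:Z.

Definition crank_even (c : int) : bool := ~~ odd `|c|%N.

Definition Me (n : nat) : nat :=
  #|[set A : {set 'I_n.+1} | distinct_partition A && crank_even (dcrank A)]|.
Definition Mo (n : nat) : nat :=
  #|[set A : {set 'I_n.+1} | distinct_partition A && ~~ crank_even (dcrank A)]|.

(* Coefficient of q^n on the left-hand side (the sum starts at n = 1). *)
Definition lhs_coef (n : nat) : int :=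
  if n == 0%N then 0%R else ((Me n)%:Z - (Mo n)%:Z)%R.

Local Open Scope ring_scope.

(* Truncation (valid modulo q^(N+1)) of the right-hand side
   1/(1+q) * sum_{n>=1} q^{n(3n+1)/2}(1-q^{2n+1}) - q (q^2;q)_oo,
   with 1/(1+q) = sum_k (-1)^k q^k and (q^2;q)_oo = prod_{j>=0} (1 - q^{j+2}). *)
Definition rhs_trunc (N : nat) : {poly int} :=
  (\sum_(k < N.+1) (-1) ^+ k *: 'X^k)
  * (\sum_(1 <= m < N.+1) 'X^((m * (3 * m + 1)) %/ 2) * (1 - 'X^(2 * m + 1)))
  - 'X * \prod_(j < N.+1) (1 - 'X^(j + 2)).

(* Split the partitions of n into distinct parts according to whether 1 is a
   part. If it is, the crank is (number of parts) - 2, so these partitions,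
   signed by the parity of the crank, are counted by -q (q^2;q)_oo. If it is
   not, the crank is the largest part; let W(q) count these partitions with
   sign (-1)^(largest part). Adding the part 1 keeps the largest part unless
   the partition is empty, so (1 + q) W(q) - 2q is the same signed count F(q)
   over all partitions into distinct parts. Franklin's involution changes the
   largest part by exactly one, hence cancels everything but the pentagonal
   partitions: F(q) = 1 - q + sum_(m >= 1) q^(m(3m+1)/2) (1 - q^(2m+1)).
   Dividing by 1 + q gives W. All identities are read on the coefficients of
   degree at most N, where 1/(1 + q) may be replaced by its truncation. *)

From mathcomp Require Import all_boot all_order all_algebra ssrint.
From mathcomp Require Import zify ring.
Import GRing.Theory.
Set Implicit Arguments. Unset Strict Implicit. Unset Printing Implicit Defensive.

Fixpoint top_run (l : seq nat) : nat :=
  match l with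
  | [::] => 0
  | x :: t =>
    match t with [::] => 1 | y :: _ => if x == y.+1 then (top_run t).+1 else 1 end
  end.

Definition incr_top t (l : seq nat) := map succn (take t l) ++ drop t l.
Definition decr_top t (l : seq nat) := map predn (take t l) ++ drop t l.

Definition distinct_parts (l : seq nat) := sorted gtn l && all (leq 1) l.

(* Franklin's involution, on parts listed largest first. With s the smallest
   part, r the length of the top run of consecutive parts and k the number of
   parts: if s <= r, the smallest part is spread over the s largest parts; if
   s > r, the top run gives up r to a new smallest part; the two exceptions
   (s = r = k and s = r + 1 = k + 1) are the pentagonal fixed points. *)
Definition franklin (l : seq nat) : seq nat :=
  if l is [::] then [::] else
  if (last 0 l <= top_run l) && (last 0 l < size l)
  then incr_top (last 0 l) (take (size l).-1 l)
  else if top_run l + (top_run l == size l) < last 0 l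
  then rcons (decr_top (top_run l) l) (top_run l)
  else l.

Fixpoint consec a k := if k is k'.+1 then (a + k') :: consec a k' else [::].

Lemma top_run0 : top_run [::] = 0. Proof. by []. Qed.
Lemma top_run1 x : top_run [:: x] = 1. Proof. by []. Qed.
Lemma top_run2 x y l :
  top_run [:: x, y & l] = if x == y.+1 then (top_run (y :: l)).+1 else 1.
Proof. by []. Qed.
Arguments top_run : simpl never.

Lemma incr_top0 l : incr_top 0 l = l. Proof. by rewrite /incr_top take0 drop0. Qed.
Lemma incr_topS t x l : incr_top t.+1 (x :: l) = x.+1 :: incr_top t l. Proof. by []. Qed.
Lemma incr_top_nil t : incr_top t [::] = [::]. Proof. by case: t. Qed.
Lemma decr_top0 l : decr_top 0 l = l. Proof. by rewrite /decr_top take0 drop0. Qed.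
Lemma decr_topS t x l : decr_top t.+1 (x :: l) = x.-1 :: decr_top t l. Proof. by []. Qed.
Lemma decr_top_nil t : decr_top t [::] = [::]. Proof. by case: t. Qed.
Arguments incr_top : simpl never.
Arguments decr_top : simpl never.

Lemma top_run_gt0 l : l != [::] -> 0 < top_run l.
Proof. by case: l => // x [|y l] _; rewrite ?top_run1 ?top_run2 //; case: ifP. Qed.

Lemma top_run_le_size l : top_run l <= size l.
Proof. by elim: l => // x [|y l] IH; rewrite ?top_run1 ?top_run2 //; case: ifP. Qed.

Lemma top_run_incr l t : sorted gtn l -> 0 < t <= top_run l -> top_run (incr_top t l) = t.
Proof.
elim: l t => [|x [|y l] IH] t; first by rewrite top_run0; lia.
  by case: t => [|[|t]].
move=> /= /andP[xy Hs]; case: t => [|[|t]] //.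
  by move=> _; rewrite incr_topS incr_top0 top_run2 eqSS (gtn_eqF xy).
rewrite top_run2; case: ifP => // /eqP Exy Ht.
by rewrite !incr_topS top_run2 -incr_topS IH // Exy eqxx.
Qed.

Lemma top_run_take l m : top_run (take m l) = minn m (top_run l).
Proof.
elim: l m => [|x [|y l] IH] [|m] //; rewrite ?take0 ?top_run0 ?minn0 ?min0n //.
case: m => [|m]; first by rewrite /= top_run1; have := @top_run_gt0 (x :: y :: l) isT; lia.
rewrite /= !top_run2 -/(take m.+1 (y :: l)).
by have := IH m.+1; rewrite /= => ->; case: ifP => _; lia.
Qed.

Lemma top_run_cat l1 l2 : top_run l1 <= top_run (l1 ++ l2).
Proof.
elim: l1 => [|x [|y l] IH]; first by rewrite top_run0.
  by rewrite top_run1 top_run_gt0.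
by rewrite /= !top_run2; case: ifP.
Qed.

Lemma top_run_decr l t : all (leq 1) l -> t <= top_run l -> t <= top_run (decr_top t l).
Proof.
elim: l t => [|x [|y l] IH] [|[|t]] //;
  rewrite ?top_run0 ?top_run1 ?decr_topS ?decr_top0 ?top_run_gt0 //.
rewrite top_run2; case: ifP => // /eqP Exy /= /andP[px /andP[py Hl]] Ht.
rewrite top_run2 Exy /= (prednK py) eqxx ltnS.
by have := IH t.+1; rewrite decr_topS; apply => //=; rewrite py.
Qed.

Lemma size_incr_top l t : size (incr_top t l) = size l.
Proof. by rewrite /incr_top size_cat size_map -size_cat cat_take_drop. Qed.

Lemma size_decr_top l t : size (decr_top t l) = size l.
Proof. by rewrite /decr_top size_cat size_map -size_cat cat_take_drop. Qed.

Lemma last_nonnil (a b : nat) s : s != [::] -> last a s = last b s.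
Proof. by case: s. Qed.

Lemma last_incr_top l t : 0 < size l -> t <= size l ->
  last 0 (incr_top t l) = last 0 l + (t == size l).
Proof.
elim: l t => [|x l IH] [|t] //; first by rewrite incr_top0 addn0.
rewrite incr_topS; case: l IH => [|y l] IH; first by case: t => //= _ _; rewrite addn1.
move=> _ Ht /=; rewrite (@last_nonnil _ 0) ?IH //.
by rewrite -size_eq0 size_incr_top.
Qed.

Lemma last_decr_top l t : 0 < size l -> t <= size l ->
  last 0 (decr_top t l) = last 0 l - (t == size l).
Proof.
elim: l t => [|x l IH] [|t] //; first by rewrite decr_top0 subn0.
rewrite decr_topS; case: l IH => [|y l] IH; first by case: t => //= _ _; rewrite subn1.
move=> _ Ht /=; rewrite (@last_nonnil _ 0) ?IH //.
by rewrite -size_eq0 size_decr_top.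
Qed.

Lemma sumn_incr_top l t : t <= size l -> sumn (incr_top t l) = sumn l + t.
Proof.
elim: l t => [|x l IH] [|t] //; rewrite ?incr_top0 ?addn0 // incr_topS /= => Ht.
by rewrite IH //; lia.
Qed.

Lemma sumn_decr_top l t : t <= size l -> all (leq 1) l -> sumn (decr_top t l) + t = sumn l.
Proof.
elim: l t => [|x l IH] [|t] //; rewrite ?decr_top0 ?addn0 // decr_topS /=.
by move=> Ht /andP[px Hl]; have := IH t Ht Hl; lia.
Qed.

Lemma path_incr_top l t x0 : path gtn x0 l -> path gtn x0.+1 (incr_top t l).
Proof.
elim: l t x0 => [|x l IH] [|t] x0 //; rewrite ?incr_top0 ?incr_top_nil //.
  by move=> /= /andP[H1 H2]; rewrite H2 andbT; lia.
by rewrite incr_topS /= => /andP[H1 H2]; rewrite IH // andbT; lia.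
Qed.

Lemma sorted_incr_top l t : sorted gtn l -> sorted gtn (incr_top t l).
Proof.
by case: l t => [|x l] [|t]; rewrite ?incr_top0 ?incr_top_nil // incr_topS; apply: path_incr_top.
Qed.

Lemma all_pos_incr_top l t : all (leq 1) l -> all (leq 1) (incr_top t l).
Proof.
elim: l t => [|x l IH] [|t]; rewrite ?incr_top0 ?incr_top_nil // incr_topS /=.
by case/andP=> _ /IH ->.
Qed.

Lemma sorted_decr_top_run l :
  sorted gtn l -> all (leq 1) l -> sorted gtn (decr_top (top_run l) l).
Proof.
elim: l => [|x [|y l] IH] //.
rewrite top_run2 /= => /andP[xy Hs] /andP[px /andP[py Hl]].
case: ifP => [/eqP Exy | /eqP Nxy]; last by rewrite decr_topS decr_top0 /= Hs andbT; lia.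
have := IH Hs; rewrite /= py Hl => /(_ isT).
case E: (top_run (y :: l)) (@top_run_gt0 (y :: l) isT) => [|r] // _.
by rewrite !decr_topS /= => ->; rewrite andbT; lia.
Qed.

Lemma incr_topK t : cancel (incr_top t) (decr_top t).
Proof.
move=> l; elim: l t => [|x l IH] [|t]; rewrite ?incr_top0 ?decr_top0 ?incr_top_nil //.
by rewrite incr_topS decr_topS IH.
Qed.

Lemma decr_topK l t : all (leq 1) l -> incr_top t (decr_top t l) = l.
Proof.
elim: l t => [|x l IH] [|t]; rewrite ?decr_top0 ?incr_top0 ?decr_top_nil //.
by rewrite decr_topS incr_topS /= => /andP[px /IH ->]; rewrite prednK.
Qed.

Lemma franklinE l : l != [::] -> franklin l =
  if (last 0 l <= top_run l) && (last 0 l < size l)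
  then incr_top (last 0 l) (take (size l).-1 l)
  else if top_run l + (top_run l == size l) < last 0 l
  then rcons (decr_top (top_run l) l) (top_run l)
  else l.
Proof. by case: l. Qed.
Arguments franklin : simpl never.

Lemma sorted_gtn_rcons b s :
  b != [::] -> sorted gtn (rcons b s) = sorted gtn b && (s < last 0 b).
Proof. by case: b => // x b _; rewrite rcons_cons /= rcons_path. Qed.

Lemma path_gtn_all_pos x l : path gtn x l -> all (leq 1) (x :: l) = (0 < last x l).
Proof.
elim: l x => [|y l IH] x /=; first by rewrite andbT.
by move=> /andP[xy /IH <-] /=; have -> : 0 < x by lia.
Qed.

Lemma sorted_gtn_all_pos l : sorted gtn l -> l != [::] -> all (leq 1) l = (0 < last 0 l).
Proof. by case: l => // x l /= /path_gtn_all_pos. Qed.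

Lemma franklin_spread_smallest b s : distinct_parts (rcons b s) ->
    s <= top_run (rcons b s) -> s < (size b).+1 ->
  [/\ distinct_parts (incr_top s b), sumn (incr_top s b) = sumn (rcons b s),
      odd (head 0 (incr_top s b)) = ~~ odd (head 0 (rcons b s)) &
      franklin (incr_top s b) = rcons b s].
Proof.
move=> /andP[Hs]; rewrite all_rcons => /andP[s0 Hpb] Hsr Hsk.
have bne : b != [::] by case: b Hsk {Hsr Hs Hpb} => // /= Hsk; lia.
move: Hs; rewrite sorted_gtn_rcons // => /andP[Hsb Hlb].
have Hrb : s <= top_run b.
  by rewrite -(take_size_cat [:: s] (erefl (size b))) cats1 top_run_take; lia.
split.
- by rewrite /distinct_parts sorted_incr_top // all_pos_incr_top.
- by rewrite sumn_incr_top ?sumn_rcons //; lia.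
- case: b bne {Hsb Hlb Hrb Hpb Hsk} Hsr => // x b _ _.
  by case: s s0 => // s _; rewrite incr_topS.
have Hm : incr_top s b != [::] by rewrite -size_eq0 size_incr_top size_eq0.
rewrite franklinE // top_run_incr ?s0 // last_incr_top ?size_incr_top; try lia.
have -> : (last 0 b + (s == size b) <= s) = false by lia.
by rewrite /= ltn_add2r Hlb incr_topK.
Qed.

Lemma franklin_peel_run l : distinct_parts l -> l != [::] ->
    ~~ ((last 0 l <= top_run l) && (last 0 l < size l)) ->
    top_run l + (top_run l == size l) < last 0 l ->
  let l' := rcons (decr_top (top_run l) l) (top_run l) in
  [/\ distinct_parts l', sumn l' = sumn l, odd (head 0 l') = ~~ odd (head 0 l) &
      franklin l' = l].
Proof.
move=> /andP[Hs Hp] lne H1 H2 l'.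
have r0 : 0 < top_run l := top_run_gt0 lne.
have rk : top_run l <= size l := top_run_le_size l.
have l0 : 0 < size l by rewrite lt0n size_eq0.
have HD : sorted gtn (decr_top (top_run l) l) := sorted_decr_top_run Hs Hp.
have Dne : decr_top (top_run l) l != [::] by rewrite -size_eq0 size_decr_top size_eq0.
have HlD := last_decr_top l0 rk.
have Hl' : sorted gtn l'.
  by rewrite sorted_gtn_rcons // HD HlD /=; move: H2; case: (_ == _) => /=; lia.
have l'ne : l' != [::] by rewrite -size_eq0 size_rcons.
split.
- by rewrite /distinct_parts Hl' sorted_gtn_all_pos // last_rcons.
- by rewrite sumn_rcons sumn_decr_top.
- rewrite /l'; case: l lne {Hs H1 H2 rk l0 HD Dne HlD Hl' l'ne l'} Hp r0 => // x l _.
  move=> /= /andP[px _].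
  case: (top_run (x :: l)) => // r _; rewrite decr_topS rcons_cons /=.
  by case: x px => // x _; rewrite /= negbK.
rewrite franklinE // last_rcons size_rcons size_decr_top.
have -> : top_run l <= top_run l'.
  by rewrite /l' -cats1 (leq_trans (top_run_decr Hp (leqnn _))) // top_run_cat.
by rewrite /l' ltnS rk /= -(size_decr_top l (top_run l)) -cats1 take_size_cat // decr_topK.
Qed.

Lemma franklin_moved l : distinct_parts l -> franklin l != l ->
  [/\ distinct_parts (franklin l), sumn (franklin l) = sumn l,
      odd (head 0 (franklin l)) = ~~ odd (head 0 l) & franklin (franklin l) = l].
Proof.
case/lastP: l => [|b s] //.
have ne : rcons b s != [::] by rewrite -size_eq0 size_rcons.
move=> Hd; rewrite [franklin _](franklinE ne) last_rcons size_rcons /=.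
rewrite -cats1 take_size_cat // cats1.
case: ifP => [/andP[T1 T2] _ | T1]; first exact: franklin_spread_smallest.
case: ifP => [T2 _ | _]; last by rewrite eqxx.
by apply: franklin_peel_run => //; rewrite last_rcons size_rcons ?T1.
Qed.

Lemma size_consec a k : size (consec a k) = k.
Proof. by elim: k => //= k ->. Qed.

Lemma last_consec a k : 0 < k -> last 0 (consec a k) = a.
Proof.
elim: k => // [[|k]] IH _; first by rewrite /= addn0.
by rewrite [consec a _]/= last_cons (@last_nonnil _ 0) ?IH // -size_eq0 size_consec.
Qed.

Lemma top_run_consec a k : top_run (consec a k) = k.
Proof.
elim: k => [|[|k] IH] //.
by rewrite [consec a _]/= top_run2 -[_ :: consec a k]/(consec a k.+1) IH addnS eqxx.
Qed.

Lemma sumn_consec a k : (sumn (consec a k)).*2 + k = k * (a.*2 + k).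
Proof. by elim: k => [|k IH] //=; rewrite doubleD; nia. Qed.

Lemma distinct_parts_consec a k : 0 < a -> distinct_parts (consec a k).
Proof.
move=> a0; apply/andP; split; last by elim: k => //= k ->; rewrite andbT; lia.
have path_consec j : path gtn (a + j) (consec a j) by elim: j => //= j ->; rewrite addnS ltnSn.
by case: k => //= k; apply: path_consec.
Qed.

Lemma top_run_full l : top_run l = size l -> l = consec (last 0 l) (size l).
Proof.
elim: l => [|x [|y l] IH] //; first by rewrite /= addn0.
rewrite top_run2; case: ifP => [/eqP Exy [] /IH | //].
by rewrite /= => -[Ey El]; rewrite addnS -Ey -El Exy.
Qed.

Lemma franklin_consec a k : (a == k) || (a == k.+1) -> franklin (consec a k) = consec a k.
Proof.
case: k => [|k] H //; rewrite franklinE //.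
rewrite last_consec // top_run_consec size_consec eqxx.
by move: H => /orP[] /eqP ->; rewrite ifF ?ifF //; lia.
Qed.

Lemma franklin_fixed l : distinct_parts l -> franklin l = l ->
  l = [::] \/ exists2 k, 0 < k & l = consec k k \/ l = consec k.+1 k.
Proof.
case/lastP: l => [|b s]; first by left.
have ne : rcons b s != [::] by rewrite -size_eq0 size_rcons.
move=> Hd Hf; right.
(* Each move flips the parity of the largest part, so a fixed point admits neither. *)
have flip (l' : seq nat) :
    l' = rcons b s -> odd (head 0 l') = ~~ odd (head 0 (rcons b s)) -> False.
  by move=> ->; case: odd.
have Hspread : ~~ ((last 0 (rcons b s) <= top_run (rcons b s)) &&
                   (last 0 (rcons b s) < size (rcons b s))).
  apply/negP; rewrite last_rcons size_rcons => /andP[T1 T2].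
  have [_ _ Ho _] := franklin_spread_smallest Hd T1 T2; apply: flip Ho.
  by move: Hf; rewrite franklinE // last_rcons size_rcons T1 T2 /= -cats1 take_size_cat.
have Hpeel : ~~ (top_run (rcons b s) + (top_run (rcons b s) == size (rcons b s))
                   < last 0 (rcons b s)).
  apply/negP => T2; have [_ _ Ho _] := franklin_peel_run Hd ne Hspread T2.
  by apply: flip Ho; move: Hf; rewrite franklinE // (negbTE Hspread) T2.
have := top_run_le_size (rcons b s); move: Hspread Hpeel; rewrite last_rcons.
have := top_run_full (l := rcons b s); rewrite last_rcons.
set r := top_run _; set k := size _ => Hfull H1 H2 rk.
have [Hrk Hs] : r = k /\ (s = k \/ s = k.+1) by move: H1 H2; case: eqP => /=; lia.
exists k; first by rewrite /k size_rcons.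
by rewrite Hfull //; case: Hs => ->; [left | right].
Qed.

Lemma mem_leq_sumn (l : seq nat) x : x \in l -> x <= sumn l.
Proof. by elim: l => //= y l IH; rewrite inE => /orP[/eqP -> | /IH]; lia. Qed.

Lemma bigmax_sorted_gtn (l : seq nat) : sorted gtn l -> \max_(x <- l) x = head 0 l.
Proof.
elim: l => [|x l IH] /=; first by rewrite big_nil.
move=> H; rewrite big_cons IH ?(path_sorted H) //.
case: l H {IH} => /= [|y l]; first by rewrite maxn0.
by case/andP => H _; apply/maxn_idPl; apply: ltnW.
Qed.

Section PartsOfSet.

Variable m : nat.
Implicit Types (A : {set 'I_m}) (l : seq nat).

Definition parts_of A : seq nat := rev (sort leq [seq val i | i <- enum A]).
Definition set_of_parts l : {set 'I_m} := [set i : 'I_m | val i \in l].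

Lemma perm_parts_of A : perm_eq (parts_of A) [seq val i | i <- enum A].
Proof. by rewrite perm_rev perm_sort. Qed.

Lemma sorted_parts_of A : sorted gtn (parts_of A).
Proof.
rewrite rev_sorted -[sorted _ _]/(sorted ltn _) ltn_sorted_uniq_leq sort_uniq.
by rewrite map_inj_uniq ?enum_uniq ?(sort_sorted leq_total) //; apply: val_inj.
Qed.

Lemma mem_parts_of A i : (val i \in parts_of A) = (i \in A).
Proof. by rewrite (perm_mem (perm_parts_of A)) (mem_map val_inj) mem_enum. Qed.

Lemma parts_of_lt A x : x \in parts_of A -> x < m.
Proof. by rewrite (perm_mem (perm_parts_of A)) => /mapP[i _ ->]; apply: ltn_ord. Qed.

Lemma sumn_parts_of A : sumn (parts_of A) = \sum_(i in A) val i.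
Proof. by rewrite (perm_sumn (perm_parts_of A)) sumnE big_map big_enum. Qed.

Lemma bigmax_parts_of A : \max_(i in A) val i = head 0 (parts_of A).
Proof.
by rewrite -bigmax_sorted_gtn ?sorted_parts_of // (perm_big _ (perm_parts_of A)) big_map big_enum.
Qed.

Lemma parts_ofK : cancel parts_of set_of_parts.
Proof. by move=> A; apply/setP => i; rewrite inE mem_parts_of. Qed.

Lemma set_of_partsK l : sorted gtn l -> {in l, forall x, x < m} ->
  parts_of (set_of_parts l) = l.
Proof.
move=> Hs Hl; apply: (irr_sorted_eq (leT := gtn)) => //.
- by move=> y x z /= H1 H2; apply: ltn_trans H2 H1.
- by move=> x; rewrite /= ltnn.
- exact: sorted_parts_of.
move=> x; apply/idP/idP => Hx.
  by move: Hx (parts_of_lt Hx) => + xm; rewrite -[x]/(val (Ordinal xm)) mem_parts_of inE.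
by rewrite -[x]/(val (Ordinal (Hl x Hx))) mem_parts_of inE.
Qed.

End PartsOfSet.

Lemma distinct_parts_of n (A : {set 'I_n.+1}) : ord0 \notin A -> distinct_parts (parts_of A).
Proof.
move=> H0; rewrite /distinct_parts sorted_parts_of; apply/allP => x Hx.
move: Hx (parts_of_lt Hx) => + xm; rewrite -[x]/(val (Ordinal xm)) mem_parts_of lt0n.
by apply: contraTneq => x0; rewrite (_ : Ordinal xm = ord0) //; apply: val_inj.
Qed.

Lemma sum_sign_reversing_involution (T : finType) (P : pred T) (w : T -> int) (f : T -> T) :
    (forall x, P x -> f x != x -> [/\ P (f x), f (f x) = x & w (f x) = (- w x)%R]) ->
  (\sum_(x | P x) w x = \sum_(x | P x && (f x == x)) w x)%R.
Proof.
(* g agrees with f on the moved points of P and is the identity elsewhere, hence a bijection. *)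
move=> Hf; pose g x := if P x && (f x != x) then f x else x.
have gE x : P x && (f x != x) -> P (g x) && (f (g x) != g x).
  by case/andP=> Px Nx; have [Pf ffx _] := Hf x Px Nx; rewrite /g Px Nx Pf ffx eq_sym Nx.
have gK : involutive g.
  move=> x; rewrite {2}/g; case: ifP => [/andP[Px Nx] | Hx]; last by rewrite /g Hx.
  by have [Pf ffx _] := Hf x Px Nx; rewrite /g Pf ffx eq_sym Nx.
rewrite (bigID (fun x => f x == x)) /=; set Z := (\sum_(x | P x && (f x != x)) w x)%R.
suff : (Z = - Z)%R by move=> HZ; rewrite (_ : Z = 0%R) ?addr0 //; lia.
rewrite {1}/Z (reindex_inj (inv_inj gK)) /= -sumrN.
apply: eq_big => x; first by apply/idP/idP => [/gE | /gE]; rewrite ?gK.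
by move/gE; rewrite gK => /andP[Px Nx]; rewrite /g Px Nx; have [_ _ ->] := Hf x Px Nx.
Qed.

Definition max_sign m (A : {set 'I_m}) : int := ((-1) ^+ (\max_(i in A) val i))%R.

Definition partition_of n j (A : {set 'I_n.+1}) :=
  (ord0 \notin A) && (\sum_(i in A) val i == j).

Definition franklin_set n (A : {set 'I_n.+1}) : {set 'I_n.+1} :=
  set_of_parts n.+1 (franklin (parts_of A)).

Definition pentagonal_parts N : seq (seq nat) :=
  [::] :: [seq consec m.+1 m | m <- iota 1 N] ++ [seq consec m.+1 m.+1 | m <- iota 0 N.+1].

Lemma pentagonal_parts_fixed N l :
  l \in pentagonal_parts N -> distinct_parts l && (franklin l == l).
Proof.
rewrite inE mem_cat => /orP[/eqP -> // | /orP[] /mapP[m _ ->]];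
  by rewrite distinct_parts_consec // franklin_consec ?eqxx ?orbT.
Qed.

Lemma uniq_pentagonal_parts N : uniq (pentagonal_parts N).
Proof.
have inj0 : injective (fun m => consec m.+1 m).
  by move=> x y /(congr1 size); rewrite !size_consec.
have inj1 : injective (fun m => consec m.+1 m.+1).
  by move=> x y /(congr1 size); rewrite !size_consec => -[].
rewrite cons_uniq mem_cat negb_or cat_uniq (map_inj_uniq inj0) (map_inj_uniq inj1).
rewrite !iota_uniq andbT; apply/and3P; split=> //; first (apply/andP; split).
- by apply/mapP=> -[m]; rewrite mem_iota; case: m => // m _ /(congr1 size); rewrite size_consec.
- by apply/mapP=> -[m _ /(congr1 size)]; rewrite size_consec.
apply/hasPn => _ /mapP[m Hm ->]; apply/mapP => -[k Hk].
move/(congr1 (fun s => (size s, last 0 s))); rewrite !size_consec !last_consec //.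
  by case=> <- /eqP; rewrite (ltn_eqF (ltnSn _)).
by move: Hk; rewrite mem_iota => /andP[].
Qed.

Lemma sumn_consec_ge a k : k <= a -> k <= sumn (consec a k).
Proof. by move=> ka; have := sumn_consec a k; nia. Qed.

Section FranklinOnSets.

Variables n j : nat.
Hypothesis j_le_n : j <= n.
Implicit Type A : {set 'I_n.+1}.

Lemma parts_lt_of_sumn l : sumn l = j -> {in l, forall x, x < n.+1}.
Proof. by move=> Hs x /mem_leq_sumn; lia. Qed.

Lemma parts_of_franklin_set A :
  partition_of j A -> parts_of (franklin_set A) = franklin (parts_of A).
Proof.
case/andP=> /distinct_parts_of Hd /eqP Hs.
have [Hfix | Hne] := eqVneq (franklin (parts_of A)) (parts_of A).
  by rewrite /franklin_set Hfix parts_ofK.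
have [/andP[Hsorted _] Hsum _ _] := franklin_moved Hd Hne.
by rewrite set_of_partsK //; apply: parts_lt_of_sumn; rewrite Hsum sumn_parts_of.
Qed.

Lemma franklin_set_moved A : partition_of j A -> franklin_set A != A ->
  [/\ partition_of j (franklin_set A), franklin_set (franklin_set A) = A &
      max_sign (franklin_set A) = (- max_sign A)%R].
Proof.
move=> HA Hne; have E := parts_of_franklin_set HA.
have /andP[/distinct_parts_of Hd /eqP Hs] := HA.
have Hfl : franklin (parts_of A) != parts_of A.
  by apply: contraNneq Hne => Hfix; rewrite /franklin_set Hfix parts_ofK.
have [/andP[_ /allP Hpos] Hsum Hodd Hinv] := franklin_moved Hd Hfl.
split.
- rewrite /partition_of -sumn_parts_of E Hsum sumn_parts_of Hs eqxx andbT.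
  by apply/negP; rewrite -mem_parts_of E => /Hpos.
- by rewrite /franklin_set E Hinv parts_ofK.
by rewrite /max_sign !bigmax_parts_of E -signr_odd Hodd -[in RHS]signr_odd; case: odd.
Qed.

Lemma franklin_set_fixedE A : partition_of j A ->
  (franklin_set A == A) = (franklin (parts_of A) == parts_of A).
Proof.
move=> HA; apply/eqP/eqP => [Hfix | Hfix]; last by rewrite /franklin_set Hfix parts_ofK.
by rewrite -parts_of_franklin_set // Hfix.
Qed.

Variable N : nat.
Hypothesis n_le_N : n <= N.

Lemma franklin_set_fixed_mem A : (partition_of j A && (franklin_set A == A)) =
  (A \in [seq set_of_parts n.+1 l | l <- pentagonal_parts N & sumn l == j]).
Proof.
apply/idP/idP.
- case/andP=> HA; rewrite franklin_set_fixedE // => /eqP Hfix.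
  have /andP[/distinct_parts_of Hd /eqP Hs] := HA.
  apply/mapP; exists (parts_of A); last by rewrite parts_ofK.
  rewrite mem_filter sumn_parts_of Hs eqxx /=.
  have [-> | [k k0 Ek]] := franklin_fixed Hd Hfix; first by rewrite inE eqxx.
  have kj : k <= j by rewrite -Hs -sumn_parts_of; case: Ek => ->; apply: sumn_consec_ge; lia.
  rewrite inE mem_cat; apply/orP; right; apply/orP.
  case: Ek => ->; [right | left]; apply/mapP.
    by exists k.-1; rewrite ?mem_iota ?prednK //; lia.
  by exists k; rewrite ?mem_iota //; lia.
case/mapP => l; rewrite mem_filter => /andP[/eqP Hs Hl] ->.
have /andP[/andP[Hsorted /allP Hpos] /eqP Hfix] := pentagonal_parts_fixed Hl.
have HlK : parts_of (set_of_parts n.+1 l) = l.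
  by rewrite set_of_partsK //; apply: parts_lt_of_sumn.
have HA : partition_of j (set_of_parts n.+1 l).
  rewrite /partition_of -sumn_parts_of HlK Hs eqxx andbT.
  by apply/negP; rewrite -mem_parts_of HlK => /Hpos.
by rewrite HA franklin_set_fixedE // HlK Hfix eqxx.
Qed.

Lemma sum_max_sign_pentagonal :
  (\sum_(A : {set 'I_n.+1} | partition_of j A) max_sign A =
   \sum_(l <- pentagonal_parts N | sumn l == j) (-1) ^+ head 0 l :> int)%R.
Proof.
rewrite (@sum_sign_reversing_involution _ _ _ (@franklin_set n)); last exact: franklin_set_moved.
rewrite (eq_bigl _ _ franklin_set_fixed_mem) -big_uniq.
  rewrite big_map big_filter big_seq_cond [RHS]big_seq_cond.
  apply: eq_bigr => l /andP[Hl /eqP Hs].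
  have /andP[/andP[Hsorted _] _] := pentagonal_parts_fixed Hl.
  by rewrite /max_sign bigmax_parts_of set_of_partsK //; apply: parts_lt_of_sumn.
rewrite map_inj_in_uniq ?filter_uniq ?uniq_pentagonal_parts //.
move=> l1 l2; rewrite !mem_filter => /andP[/eqP H1 L1] /andP[/eqP H2 L2] /(congr1 (@parts_of _)).
have /andP[/andP[D1 _] _] := pentagonal_parts_fixed L1.
have /andP[/andP[D2 _] _] := pentagonal_parts_fixed L2.
by rewrite !set_of_partsK //; apply: parts_lt_of_sumn.
Qed.

End FranklinOnSets.

Local Open Scope ring_scope.

Section Truncation.

Context {R : nzRingType}.
Implicit Types p q : {poly R}.

Definition eq_upto k p q := forall i, (i <= k)%N -> p`_i = q`_i.

Lemma eq_upto_refl k p : eq_upto k p p. Proof. by []. Qed.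

Lemma eq_upto_sym k p q : eq_upto k p q -> eq_upto k q p.
Proof. by move=> H i /H ->. Qed.

Lemma eq_upto_trans k p q r : eq_upto k p q -> eq_upto k q r -> eq_upto k p r.
Proof. by move=> H1 H2 i Hi; rewrite H1 // H2. Qed.

Lemma eq_uptoD k p q p' q' : eq_upto k p p' -> eq_upto k q q' -> eq_upto k (p + q) (p' + q').
Proof. by move=> H1 H2 i Hi; rewrite !coefD H1 // H2. Qed.

Lemma eq_uptoM k p q p' q' : eq_upto k p p' -> eq_upto k q q' -> eq_upto k (p * q) (p' * q').
Proof.
move=> H1 H2 i Hi; rewrite !coefM; apply: eq_bigr => j _.
by rewrite H1 ?H2 //; have := ltn_ord j; lia.
Qed.

Lemma eq_upto_prod1 k I (r : seq I) (P : pred I) (F : I -> {poly R}) :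
  (forall i, P i -> eq_upto k (F i) 1) -> eq_upto k (\prod_(i <- r | P i) F i) 1.
Proof.
move=> H; elim/big_ind: _ => // x y Hx Hy.
by rewrite -(mulr1 1); apply: eq_uptoM.
Qed.

Lemma eq_upto_1subXn k e : (k < e)%N -> eq_upto k (1 - 'X^e) 1.
Proof.
by move=> ke i Hi; rewrite coefB coefXn (_ : i == e = false) ?subr0 //; apply/eqP; lia.
Qed.

Lemma eq_upto_prod_1subXn k N : (k <= N)%N ->
  eq_upto k (\prod_(j < N) (1 - 'X^(j + 2))) (\prod_(j < k) (1 - 'X^(j + 2))).
Proof.
move=> kN; rewrite -!(big_mkord xpredT (fun j => 1 - 'X^(j + 2))) (@big_cat_nat _ _ _ k) //=.
rewrite -[X in eq_upto _ _ X]mulr1; apply: eq_uptoM (eq_upto_refl _) _.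
rewrite big_nat_cond; apply: eq_upto_prod1 => j /andP[/andP[kj _] _].
by apply: eq_upto_1subXn; lia.
Qed.

End Truncation.


Section AlternatingSeries.

Context {R : comNzRingType}.

Definition alt_series N : {poly R} := \sum_(k < N.+1) (-1) ^+ k *: 'X^k.

Lemma mul_1addX_alt_series N : (1 + 'X) * alt_series N = 1 + (-1) ^+ N *: 'X^(N.+1).
Proof.
elim: N => [|N IH]; first by rewrite /alt_series big_ord1 !scale1r expr1 mulr1.
rewrite /alt_series big_ord_recr /= -/(alt_series N) mulrDr IH.
rewrite [(-1) ^+ N.+1]exprS mulN1r scaleNr [in RHS]exprSr -!mul_polyC; ring.
Qed.

Lemma eq_upto_mul_1addX_alt_series n N : (n <= N)%N -> eq_upto n ((1 + 'X) * alt_series N) 1.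
Proof.
move=> nN i Hi; rewrite mul_1addX_alt_series coefD coefZ coefXn.
by rewrite (_ : i == N.+1 = false) ?mulr0 ?addr0 //; apply/eqP; lia.
Qed.

End AlternatingSeries.

Definition pentagonal_sum N : {poly int} :=
  \sum_(1 <= m < N.+1) 'X^((m * (3 * m + 1)) %/ 2) * (1 - 'X^(2 * m + 1)).

Lemma sumn_consec_pentagonal m : sumn (consec m.+1 m) = ((m * (3 * m + 1)) %/ 2)%N.
Proof.
have := sumn_consec m.+1 m; rewrite -!muln2 => H.
by rewrite (_ : m * _ = sumn (consec m.+1 m) * 2)%N ?mulnK //; nia.
Qed.

Lemma pentagonal_parts_gf N :
  \sum_(l <- pentagonal_parts N) (-1) ^+ head 0 l *: 'X^(sumn l) = 1 - 'X + pentagonal_sum N.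
Proof.
have even_terms :
    \sum_(m <- iota 1 N) (-1) ^+ head 0 (consec m.+1 m) *: 'X^(sumn (consec m.+1 m)) =
    \sum_(m <- iota 1 N) 'X^(sumn (consec m.+1 m)) :> {poly int}.
  apply: eq_big_seq => -[|m]; rewrite mem_iota // => _.
  by rewrite -signr_odd -[head 0 _]/(m.+2 + m)%N addSnnS oddD addbb scale1r.
have odd_term m : (-1) ^+ head 0 (consec m.+1 m.+1) *: 'X^(sumn (consec m.+1 m.+1))
    = - 'X^(sumn (consec m.+1 m) + (2 * m + 1)) :> {poly int}.
  rewrite -signr_odd -[head 0 _]/(m.+1 + m)%N addSn oddS oddD addbb scaleN1r.
  by rewrite -[sumn (consec _ m.+1)]/(m.+1 + m + sumn (consec m.+1 m))%N; congr (- 'X^_); lia.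
rewrite big_cons big_cat !big_map scale1r -[iota 0 N.+1]/(0 :: iota 1 N) big_cons odd_term.
rewrite even_terms (eq_bigr _ (fun m _ => odd_term m)) sumrN.
rewrite /pentagonal_sum /index_iota subSS subn0.
under [in RHS]eq_bigr do rewrite mulrBr mulr1 -exprD -sumn_consec_pentagonal.
rewrite sumrB expr1 [sumn [::]]/= expr0 /=; ring.
Qed.

Lemma coef0_pentagonal_sum N : (pentagonal_sum N)`_0 = 0.
Proof.
rewrite coef_sum big1_seq // => m /andP[_]; rewrite mem_index_iota => /andP[m1 _].
by rewrite coefXnM ifT // divn_gt0 //; nia.
Qed.

Lemma coef_pentagonal_parts_gf N j : (1 - 'X + pentagonal_sum N)`_j =
  \sum_(l <- pentagonal_parts N | sumn l == j) (-1) ^+ head 0 l.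
Proof.
rewrite -pentagonal_parts_gf coef_sum [RHS]big_mkcond /=; apply: eq_bigr => l _.
by rewrite coefZ coefXn eq_sym; case: eqP; rewrite ?mulr1 ?mulr0.
Qed.

Lemma sum_max_sign_partition_of n j N : (j <= n <= N)%N ->
  \sum_(A : {set 'I_n.+1} | partition_of j A) max_sign A = (1 - 'X + pentagonal_sum N)`_j.
Proof.
by case/andP=> jn nN; rewrite coef_pentagonal_parts_gf (sum_max_sign_pentagonal jn nN).
Qed.

Section PartitionsOf.

Variable k : nat.
Implicit Types A B J : {set 'I_k.+2}.

Definition ord_one : 'I_k.+2 := @Ordinal k.+2 1 isT.

Definition max_sign_gf : {poly int} :=
  \sum_(A : {set 'I_k.+2} | ord0 \notin A) max_sign A *: 'X^(\sum_(i in A) val i).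

Definition max_sign_gf_no_one : {poly int} :=
  \sum_(A : {set 'I_k.+2} | (ord0 \notin A) && (ord_one \notin A))
    max_sign A *: 'X^(\sum_(i in A) val i).

Definition crank_sign A : int := if crank_even (dcrank A) then 1 else -1.

Lemma lhs_coef_crank_sign :
  lhs_coef k.+1 = \sum_(A : {set 'I_k.+2} | distinct_partition A) crank_sign A.
Proof.
rewrite /lhs_coef /= /Me /Mo (bigID (fun A => crank_even (dcrank A))) /=.
rewrite (eq_bigr (fun _ => 1)) => [|A /andP[_ E]]; last by rewrite /crank_sign E.
rewrite [X in _ = _ + X](eq_bigr (fun _ => -1)) => [|A /andP[_ /negbTE E]]; last first.
  by rewrite /crank_sign E.
rewrite (eq_bigl (fun A => A \in [set A | distinct_partition A && crank_even (dcrank A)]))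
  => [|A]; last by rewrite inE.
rewrite [X in _ = _ + X](eq_bigl (fun A =>
  A \in [set A | distinct_partition A && ~~ crank_even (dcrank A)])) => [|A]; last by rewrite inE.
by rewrite !sumr_const mulNrn -!natz.
Qed.

Lemma crank_signE A : crank_sign A = if ord_one \in A then (-1) ^+ #|A| else max_sign A.
Proof.
rewrite /crank_sign /dcrank; have -> : [exists i in A, (i : nat) == 1%N] = (ord_one \in A).
  apply/existsP/idP => [[i /andP[iA /eqP i1]] | H]; last by exists ord_one; rewrite H.
  by rewrite (_ : ord_one = i) //; apply: val_inj.
have odd_sub2 m : odd `|m%:Z - 2|%N = odd m.
  by case: m => [|[|m]] //; rewrite -addn2 PoszD addrK absz_nat addn2 /= negbK.
rewrite /crank_even /max_sign; case: (ord_one \in A); rewrite ?odd_sub2 ?absz_nat -signr_odd;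
  by case: odd.
Qed.

Lemma lhs_coef_split : lhs_coef k.+1 =
  \sum_(A : {set 'I_k.+2} | distinct_partition A && (ord_one \in A)) (-1) ^+ #|A| +
  \sum_(A : {set 'I_k.+2} | distinct_partition A && (ord_one \notin A)) max_sign A.
Proof.
rewrite lhs_coef_crank_sign (bigID (fun A => ord_one \in A)) /=.
congr (_ + _); apply: eq_bigr => A /andP[_ A1]; rewrite crank_signE ?A1 //.
by rewrite (negbTE A1).
Qed.

Lemma coef_max_sign_gf j :
  max_sign_gf`_j = \sum_(A : {set 'I_k.+2} | partition_of j A) max_sign A.
Proof.
rewrite coef_sum [RHS]big_mkcondr /=; apply: eq_bigr => A _.
by rewrite coefZ coefXn eq_sym; case: eqP; rewrite ?mulr1 ?mulr0.
Qed.

Lemma coef_max_sign_gf_no_one : max_sign_gf_no_one`_k.+1 =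
  \sum_(A : {set 'I_k.+2} | distinct_partition A && (ord_one \notin A)) max_sign A.
Proof.
rewrite coef_sum /distinct_partition [RHS]big_mkcond [LHS]big_mkcond /=.
apply: eq_bigr => A _.
case: (ord0 \in A) (ord_one \in A) => [|] [|] //=; rewrite ?andbF ?coef0 //.
by rewrite coefZ coefXn eq_sym; case: eqP; rewrite ?mulr1 ?mulr0.
Qed.

Lemma max_sign_ge2 B : ord0 \notin B -> ord_one \notin B -> B != set0 ->
  (2 <= \max_(i in B) val i)%N.
Proof.
move=> H0 H1 /set0Pn[i iB]; apply: leq_trans (leq_bigmax_cond _ iB).
case: i iB => [[|[|i]] Hi] iB //.
  by move: H0; rewrite (_ : ord0 = Ordinal Hi) ?iB //; apply: val_inj.
by move: H1; rewrite (_ : ord_one = Ordinal Hi) ?iB //; apply: val_inj.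
Qed.

Lemma max_sign_gf_add_one : max_sign_gf = (1 + 'X) * max_sign_gf_no_one - 'X *+ 2.
Proof.
rewrite /max_sign_gf (bigID (fun A => ord_one \in A)) /= -/max_sign_gf_no_one.
rewrite (reindex_onto (fun B => ord_one |: B) (fun A => A :\ ord_one)) /=; last first.
  by move=> A /andP[_ H]; rewrite setD1K.
rewrite (eq_bigl (fun B => (ord0 \notin B) && (ord_one \notin B))); last first.
  move=> B; rewrite !in_setU1 eqxx /= andbT.
  have [H1 | H1] /= := boolP (ord_one \in B); last by rewrite setU1K // eqxx andbT.
  by rewrite andbF; apply/negbTE/negP => /andP[_ /eqP E]; move: H1; rewrite -E !inE eqxx.
rewrite (eq_bigr (fun B => 'X * (max_sign B *: 'X^(\sum_(i in B) val i)) -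
                           (if B == set0 then 'X *+ 2 else 0))); last first.
  move=> B /andP[H0 H1]; rewrite /max_sign big_setU1 //= big_setU1 //= exprS.
  have [-> | Bn] := eqVneq B set0.
    by rewrite !big_set0 /= expr0 scale1r mulr1 expr1 scaleN1r; ring.
  rewrite subr0 scalerAr; congr (_ * (_ ^+ _ *: _)).
  by apply/maxn_idPr; apply: leq_trans (max_sign_ge2 H0 H1 Bn).
rewrite sumrB -mulr_sumr -/max_sign_gf_no_one -big_mkcondr /=.
rewrite (eq_bigl (pred1 set0)) ?big_pred1_eq; first by ring.
by move=> B /=; case: eqP => [-> | _]; rewrite ?andbF ?inE.
Qed.

Lemma coef_X_prod_with_one :
  (- 'X * \prod_(j < k) (1 - 'X^(j + 2)) : {poly int})`_k.+1 =
  \sum_(A : {set 'I_k.+2} | distinct_partition A && (ord_one \in A)) (-1) ^+ #|A|.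
Proof.
(* In the expansion of the product of the [F i + G i], the term choosing [F] exactly
   on J vanishes unless 0 is not in J and 1 is. *)
pose F (i : 'I_k.+2) : {poly int} := if val i == 0%N then 0 else - 'X^(val i).
pose G (i : 'I_k.+2) : {poly int} := if val i == 1%N then 0 else 1.
have prodE : \prod_(i : 'I_k.+2) (F i + G i) = - 'X * \prod_(j < k) (1 - 'X^(j + 2)).
  rewrite big_ord_recl big_ord_recl /F /G /= add0r mul1r addr0 /bump /= expr1.
  by congr (_ * _); apply: eq_bigr => i _; rewrite addrC !add1n addn2.
have termE J : \prod_i (if i \in J then F i else G i) =
    if (ord0 \notin J) && (ord_one \in J)
    then (-1) ^+ #|J| * 'X^(\sum_(i in J) val i) else 0.
  have [H0 | H0] /= := boolP (ord0 \in J); first by rewrite (bigD1 ord0) //= H0 /F mul0r.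
  have [H1 | H1] /= := boolP (ord_one \in J); last first.
    by rewrite (bigD1 ord_one) //= (negbTE H1) /G mul0r.
  rewrite (eq_bigr (fun i => if i \in J then - 'X^(val i) else 1)); last first.
    move=> i _; case: ifP => Hi; [rewrite /F | rewrite /G]; case: eqP => // E.
      by move: H0; rewrite (_ : ord0 = i) ?Hi //; apply: val_inj.
    by move: H1; rewrite (_ : ord_one = i) ?Hi //; apply: val_inj.
  by rewrite -big_mkcond /= prodrN prodrXr.
rewrite -prodE bigA_distr coef_sum [LHS]big_mkcond [RHS]big_mkcond /=.
apply: eq_bigr => J _; rewrite termE /distinct_partition.
case: (ord0 \in J) (ord_one \in J) => [|] [|] //=; rewrite ?andbF ?coef0 //.
rewrite -signr_odd -[in RHS]signr_odd.
by case: odd; rewrite ?mul1r ?mulN1r ?coefN coefXn eq_sym; case: eqP.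
Qed.

Lemma max_sign_gf_no_one_trunc N : (k < N)%N ->
  eq_upto k.+1 max_sign_gf_no_one (1 + alt_series N * pentagonal_sum N).
Proof.
move=> kN; have alt_inv := @eq_upto_mul_1addX_alt_series int k.+1 N kN.
have fine : eq_upto k.+1 max_sign_gf (1 - 'X + pentagonal_sum N).
  by move=> j jk; rewrite coef_max_sign_gf (@sum_max_sign_partition_of k.+1 j N) ?jk.
have mul_1addX : eq_upto k.+1 ((1 + 'X) * max_sign_gf_no_one) (1 + 'X + pentagonal_sum N).
  rewrite (_ : 1 + 'X + _ = 1 - 'X + pentagonal_sum N + 'X *+ 2); last by ring.
  rewrite -[_ * _](subrK ('X *+ 2)) -max_sign_gf_add_one; exact: eq_uptoD fine (eq_upto_refl _).
have divide : eq_upto k.+1 max_sign_gf_no_one (alt_series N * ((1 + 'X) * max_sign_gf_no_one)).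
  rewrite mulrA [alt_series N * _]mulrC -[X in eq_upto _ X _]mul1r.
  exact: eq_uptoM (eq_upto_sym alt_inv) (eq_upto_refl _).
apply: eq_upto_trans divide (eq_upto_trans (eq_uptoM (eq_upto_refl _) mul_1addX) _).
by rewrite mulrDr mulrC; apply: eq_uptoD alt_inv (eq_upto_refl _).
Qed.

End PartitionsOf.

Theorem theorem5p1 :
  forall N n : nat, (n <= N)%N -> lhs_coef n = ((rhs_trunc N)`_n)%R.
Proof.
move=> N [|k] kN.
  rewrite /rhs_trunc coefB coefXM /= subr0 coefM big_ord1 -/(pentagonal_sum N).
  by rewrite coef0_pentagonal_sum mulr0.
rewrite lhs_coef_split -coef_X_prod_with_one -coef_max_sign_gf_no_one.
rewrite (max_sign_gf_no_one_trunc kN) //.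
rewrite /rhs_trunc -/(alt_series N) -/(pentagonal_sum N) coefB !mulNr coefN !coefXM /=.
by rewrite (eq_upto_prod_1subXn (leqW (ltnW kN))) // coefD coef1 add0r addrC.
Qed.
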